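(* Given integers $1 \le k' < k$ and reals $\beta, \xi > 0$, there exist $C, T > 0$ such that the following holds for all sufficiently large $n$ and all $m \ge C n^{1 - 1/(k-1)}$: for all but at most $\beta^m \binom{n}{m}$ of the $m$-element sets $S \subseteq [n]$, there exists $X \subset S$ with $|X| \le \xi m$ such that $$\frac{1}{n} \sum_{x \in [n]} \mathrm{AP}_{k',k}(x, S \setminus X, [n])^2 \le T \mu_e^2,$$ where $\mu_e = n (m/n)^{k'}$.
   Context: $[n] = \{1, \ldots, n\}$. A $k$-term arithmetic progression (AP) is a set of the form $\{a, a+d, \ldots, a+(k-1)d\}$ of integers with $d \ge 1$. For $x \in [n]$, sets $S \subseteq D \subseteq [n]$ and integers $0 \le k' \le k$, $\mathrm{AP}_{k',k}(x, S, D)$ denotes the number of $k$-term APs contained in $D$ which contain $x$ and contain at least $k'$ elements of $S \setminus \{x\}$. *)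

From Stdlib Require Import Reals.
From mathcomp Require Import all_boot.
Set Implicit Arguments. Unset Strict Implicit. Unset Printing Implicit Defensive.

(* Subsets of [n] = {1,...,n} are represented as S : {set 'I_n.+1} with
   ord0 \notin S; a natural number y is "in S" iff some element of S has value y. *)
Definition inS (n : nat) (S : {set 'I_n.+1}) (y : nat) : bool :=
  [exists z in S, val z == y].

Definition subset_of_n (n : nat) (S : {set 'I_n.+1}) : bool := ord0 \notin S.

(* AP_{k',k}(x, S, D) for D a subset of [n] (given as a predicate on nat):
   number of k-term APs {a, a+d, ..., a+(k-1)d} (d >= 1) contained in D,
   containing x, and containing at least k' elements of S \ {x}.
   For k >= 2 each such set corresponds to a unique pair (a,d); since D is
   a subset of [n], a and d range over 0..n.  The elements a+id (i<k) are
   distinct, so counting indices i counts elements. *)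
Definition AP (n k' k : nat) (x : nat) (S D : pred nat) : nat :=
  #|[set ad : 'I_n.+1 * 'I_n.+1 |
      let a := val ad.1 in let d := val ad.2 in
      [&& 0 < d,
          all (fun i => D (a + i * d)) (iota 0 k),
          has (fun i => a + i * d == x) (iota 0 k) &
          k' <= count (fun i => S (a + i * d) && (a + i * d != x)) (iota 0 k)]]|.

Definition intn (n : nat) : pred nat := fun y => (0 < y) && (y <= n).
Delimit Scope R_scope with Re.

From Stdlib Require Import Reals.
From mathcomp Require Import all_boot.
From Stdlib Require Import Lra.
From mathcomp Require Import zify.
Set Implicit Arguments. Unset Strict Implicit. Unset Printing Implicit Defensive.

(* The deletion method.  Write p = m/n.  A pair of APs through x, each marked by at least k'
   of its elements other than x, is a configuration supported on its marked elements, and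
   sum_x AP(x, S)^2 is at most the number f(S) of configurations supported in S.  There are
   O(n^3) configurations, of weight p^(2k') when their two supports are disjoint, and O(n^2)
   overlapping ones, of weight p^k'; since m >= n^(1 - 1/(k-1)) >= n^(1 - 1/k'), the mean of
   f over m-sets is O(n^3 p^(2k')).  Pick b, Q with b beta >= 1 and Q xi >= 2k, and let
   q = m %/ Q.  If no X of size at most 2kq brings f(S \ X) down to L = b^(2Q) K n^3 p^(2k'),
   then S carries (L+1)^q sequences of q configurations with disjoint supports; the mean
   number of such sequences is at most (mean f)^q, so at most a fraction
   (mean f / (L+1))^q <= b^(-2Qq) <= beta^m of the m-sets S are of this kind. *)

Lemma leq_sum_subset (I : finType) (A B : {set I}) (F : I -> nat) :
  A \subset B -> \sum_(i in A) F i <= \sum_(i in B) F i.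
Proof.
by move=> AB; rewrite [X in _ <= X](big_setID A) /= (setIidPr AB) leq_addr.
Qed.

Lemma leq_expn2r a c j : a <= c -> a ^ j <= c ^ j.
Proof. by move=> ac; case: j => // j; rewrite leq_exp2r. Qed.

Lemma leq_mixed_expn m N s u v : m <= N -> v <= u -> u <= s ->
  m ^ u * N ^ (s - u) <= m ^ v * N ^ (s - v).
Proof.
move=> mN vu us.
have -> : s - v = (u - v) + (s - u) by lia.
by rewrite -{1}(subnKC vu) !expnD -!mulnA leq_mul2l leq_mul ?leq_expn2r ?orbT.
Qed.

(* 'C(d - u, m - u) / 'C(d, m) = (m)_u / (d)_u <= (m / d)^u <= (M / N)^u *)
Lemma leq_bin_subn_expn M N u d m : M <= N -> m * N <= M * d -> u <= m ->
  'C(d - u, m - u) * N ^ u <= 'C(d, m) * M ^ u.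
Proof.
move=> MN; elim: u d m => [|u IH] d m hmd hu; first by rewrite !subn0 !muln1.
case: m hmd hu => [//|m] hmd hu; case: d hmd => [|d] hmd.
  have -> : N = 0 by nia.
  by rewrite exp0n // muln0.
rewrite !subSS expnS [M ^ u.+1]expnS.
have h1 := IH d m ltac:(nia) hu.
have h2 : 'C(d, m) * N <= 'C(d.+1, m.+1) * M.
  rewrite -(leq_pmul2r (ltn0Sn d)) mulnAC (mulnC 'C(d, m)) (mul_bin_diag d.+1 m).
  by rewrite mulnAC -(mulnA 'C(_, _)) (mulnC 'C(_, _) (M * _)) leq_mul2r hmd orbT.
rewrite mulnCA; apply: leq_trans (leq_mul (leqnn N) h1) _.
by rewrite mulnA (mulnC N) [X in _ <= X]mulnA leq_mul2r h2 orbT.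
Qed.

Lemma leq_cancel_expn c C W Z a q : 0 < Z -> a * W <= Z ->
  c * Z ^ q <= C * W ^ q -> c * a ^ q <= C.
Proof.
move=> Z0 aWZ hc; have Zq : 0 < Z ^ q by rewrite expn_gt0 Z0.
rewrite -(leq_pmul2r Zq).
rewrite mulnAC; apply: leq_trans (leq_mul hc (leqnn _)) _.
by rewrite -mulnA -expnMn leq_mul2l (mulnC W) leq_expn2r ?orbT.
Qed.

Lemma card_set_ord_count k (P : pred nat) : #|[set i : 'I_k | P i]| = count P (iota 0 k).
Proof.
rewrite -sum1_card -sum1_count (eq_bigl (fun i : 'I_k => P i)) => [|i]; last by rewrite inE.
by rewrite -(big_mkord P (fun _ => 1)) /index_iota subn0.
Qed.

Lemma ap_eq_of_two_terms a d a' d' i j : i != j ->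
  a + i * d = a' + i * d' -> a + j * d = a' + j * d' -> a = a' /\ d = d'.
Proof. move=> /eqP ij ei ej; have ed : d = d' by nia. by split; [lia|]. Qed.

Definition msets (T : finType) (D : {set T}) (m : nat) : {set {set T}} :=
  [set S : {set T} | (S \subset D) && (#|S| == m)].

Lemma sum_msets_supersets (T : finType) (D U : {set T}) m (F : {set T} -> nat) :
  \sum_(S in msets D m | U \subset S) F (S :\: U) <=
  \sum_(S in msets (D :\: U) (m - #|U|)) F S.
Proof.
set A := [set S in msets D m | U \subset S].
rewrite (eq_bigl (mem A)) => [|S]; last by rewrite !inE.
rewrite -(big_imset _ (h := fun S => S :\: U)) /=; last first.
  move=> S1 S2; rewrite !inE => /andP [_ US1] /andP [_ US2] eqSU.
  by rewrite -(setID S1 U) -(setID S2 U) (setIidPr US1) (setIidPr US2) eqSU.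
apply: leq_sum_subset; apply/subsetP => S' /imsetP [S]; rewrite !inE.
case/andP=> /andP [SD /eqP <-] US ->.
by rewrite setSD //= cardsDS.
Qed.

Section Deletion.
Variables (T I : finType) (G : {set I}) (supp : I -> {set T}) (s0 : nat).
Hypothesis card_supp_le : forall c, c \in G -> #|supp c| <= s0.

Definition ncontained (S : {set T}) : nat := #|[set c in G | supp c \subset S]|.

Fixpoint npack (S : {set T}) (q : nat) : nat :=
  if q is q'.+1 then \sum_(c in G | supp c \subset S) npack (S :\: supp c) q' else 1.

Definition robust (L r : nat) (S : {set T}) : bool :=
  [forall X : {set T}, (X \subset S) && (#|X| <= r) ==> (L < ncontained (S :\: X))].

Definition weight (M N : nat) : nat :=
  \sum_(c in G) M ^ #|supp c| * N ^ (s0 - #|supp c|).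

Lemma not_robust L r S : ~~ robust L r S ->
  exists2 X : {set T}, X \subset S & #|X| <= r /\ ncontained (S :\: X) <= L.
Proof.
case/forallPn=> X; rewrite negb_imply -leqNgt => /andP [/andP [XS Xr] hL].
by exists X.
Qed.

Lemma npack_lower L q S : robust L (q * s0) S -> L.+1 ^ q <= npack S q.
Proof.
elim: q S => [|q IH] S /forallP robS /=; first by rewrite expn0.
have hpack c : (c \in G) && (supp c \subset S) -> L.+1 ^ q <= npack (S :\: supp c) q.
  case/andP=> cG cS; apply/IH/forallP => X; apply/implyP => /andP [XS Xq].
  have := implyP (robS (X :|: supp c)); rewrite setDDl setUC; apply.
  rewrite subUset cS (subset_trans XS (subsetDl _ _)) /=.
  apply: leq_trans (leq_card_setU _ _) _.
  by rewrite mulSn leq_add ?card_supp_le.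
apply: leq_trans (leq_sum _ hpack); rewrite sum_nat_const expnS leq_mul2r.
have := implyP (robS set0); rewrite sub0set cards0 setD0 => /(_ isT) hL.
rewrite (leq_trans hL) ?orbT // /ncontained subset_leq_card //.
by apply/subsetP => c; rewrite !inE.
Qed.

Lemma sum_npack_le M N q (D : {set T}) m : M <= N -> m * N <= M * #|D| ->
  \sum_(S in msets D m) npack S q * N ^ (s0 * q) <= 'C(#|D|, m) * weight M N ^ q.
Proof.
move=> MN; elim: q D m => [|q IH] D m hmD.
  under eq_bigr do rewrite muln0 expn0 muln1.
  by rewrite sum1_card cards_draws expn0 muln1.
rewrite expnS mulnCA {1}/weight big_distrl /=.
under eq_bigr do rewrite big_distrl /=.
rewrite (exchange_big_dep (mem G)) /=; last by move=> S c _ /andP [].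
apply: leq_sum => c cG; set U := supp c.
rewrite (eq_bigl (fun S => (S \in msets D m) && (U \subset S))); last first.
  by move=> S; rewrite cG.
have [/andP [UD Um] | UDm] := boolP ((U \subset D) && (#|U| <= m)); last first.
  rewrite big1 // => S /andP [+ US]; rewrite inE => /andP [SD /eqP Sm].
  by case/negP: UDm; rewrite (subset_trans US SD) -Sm subset_leq_card.
have -> : N ^ (s0 * q.+1) = N ^ (s0 * q) * N ^ #|U| * N ^ (s0 - #|U|).
  by rewrite -!expnD -addnA subnKC ?card_supp_le // mulnS addnC.
under eq_bigr do rewrite !mulnA.
rewrite -big_distrl -big_distrl /=.
have hpack := sum_msets_supersets D U m (fun S => npack S q * N ^ (s0 * q)).
have := IH (D :\: U) (m - #|U|); rewrite cardsDS // => /(_ _)/(leq_trans hpack) hIH.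
apply: leq_trans (leq_mul (leq_mul (hIH _) (leqnn _)) (leqnn _)) _; first by nia.
rewrite (mulnAC 'C(_, _)).
apply: leq_trans (leq_mul (leq_mul (leq_bin_subn_expn MN hmD Um) (leqnn _)) (leqnn _)) _.
by apply: eq_leq; lia.
Qed.

Lemma card_robust_le M N L q (D : {set T}) m : M <= N -> m * N <= M * #|D| ->
  #|[set S in msets D m | robust L (q * s0) S]| * (L.+1 * N ^ s0) ^ q <=
  'C(#|D|, m) * weight M N ^ q.
Proof.
move=> MN hmD; apply: leq_trans (sum_npack_le q MN hmD).
rewrite expnMn -expnM -sum_nat_const.
set B := [set S in msets D m | _].
apply: (@leq_trans (\sum_(S in B) npack S q * N ^ (s0 * q))).
  by apply: leq_sum => S; rewrite inE => /andP [_ robS]; rewrite leq_mul2r npack_lower ?orbT.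
by apply: leq_sum_subset; apply/subsetP => S; rewrite inE => /andP [].
Qed.
End Deletion.

Definition ap_const (k : nat) : nat :=
  (8 + 4 * #|{: option ('I_k * 'I_k)}|) * #|{: option 'I_k * {set 'I_k}}| ^ 2.

Lemma ap_const_gt0 k : 0 < ap_const k.
Proof.
rewrite muln_gt0 expn_gt0 addn_gt0 /=; apply/orP; left.
by apply/card_gt0P; exists (None, set0).
Qed.

Section MarkedAPs.
Variables (n k k' : nat).

(* ((a, d), J): the AP a, a + d, ..., a + (k-1) d with the set J of marked indices. *)
Definition marked_ap := (('I_n.+1 * 'I_n.+1) * {set 'I_k})%type.

Definition ap_term (ad : 'I_n.+1 * 'I_n.+1) (i : nat) : nat := val ad.1 + i * val ad.2.

Definition ap_through (x : nat) (h : marked_ap) : bool :=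
  [&& 0 < val h.1.2, [forall i : 'I_k, intn n (ap_term h.1 i)],
      [exists i : 'I_k, ap_term h.1 i == x], [forall i in h.2, ap_term h.1 i != x]
    & k' <= #|h.2|].

Definition marked (h : marked_ap) : {set 'I_n.+1} :=
  [set z | [exists i in h.2, val z == ap_term h.1 i]].

Definition ap_pairs : {set 'I_n.+1 * (marked_ap * marked_ap)} :=
  [set c | ap_through (val c.1) c.2.1 && ap_through (val c.1) c.2.2].

Definition pair_marked (c : 'I_n.+1 * (marked_ap * marked_ap)) : {set 'I_n.+1} :=
  marked c.2.1 :|: marked c.2.2.

Definition overlapping_pairs : {set 'I_n.+1 * (marked_ap * marked_ap)} :=
  [set c in ap_pairs | marked c.2.1 :&: marked c.2.2 != set0].

Lemma card_marked_le h : #|marked h| <= #|h.2|.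
Proof.
apply: leq_trans (leq_imset_card (fun i : 'I_k => inord (ap_term h.1 i) : 'I_n.+1) h.2).
apply/subset_leq_card/subsetP => z; rewrite inE => /existsP [i /andP [iJ /eqP ez]].
by apply/imsetP; exists i; rewrite // -ez inord_val.
Qed.

Lemma card_marked x h : ap_through x h -> #|marked h| = #|h.2|.
Proof.
case/and5P=> d0 /forallP hin _ _ _; apply/eqP; rewrite eqn_leq card_marked_le /=.
pose f (i : 'I_k) : 'I_n.+1 := inord (ap_term h.1 i).
have val_f i : nat_of_ord (f i) = ap_term h.1 i.
  by rewrite inordK // ltnS; case/andP: (hin i).
rewrite -(@card_in_imset _ _ f) => [|i j _ _ /(congr1 (@nat_of_ord _))]; last first.
  by rewrite !val_f /ap_term => eqij; apply: val_inj; move: d0 eqij => /=; nia.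
apply/subset_leq_card/subsetP => _ /imsetP [i iJ ->].
by rewrite inE; apply/existsP; exists i; rewrite iJ; apply/eqP/val_f.
Qed.

Lemma card_pair_marked_le c : #|pair_marked c| <= k + k.
Proof.
apply: leq_trans (leq_card_setU _ _) _.
by apply: leq_add; rewrite (leq_trans (card_marked_le _)) // (leq_trans (max_card _)) ?card_ord.
Qed.

Definition aps_through (x : nat) (S : {set 'I_n.+1}) : {set 'I_n.+1 * 'I_n.+1} :=
  [set ad | [&& 0 < val ad.2, all (fun i => intn n (ap_term ad i)) (iota 0 k),
               has (fun i => ap_term ad i == x) (iota 0 k)
             & k' <= count (fun i => inS S (ap_term ad i) && (ap_term ad i != x)) (iota 0 k)]].

Lemma AP_aps_through x S : AP n k' k x (inS S) (intn n) = #|aps_through x S|.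
Proof. by []. Qed.

Definition marks_in (x : nat) (S : {set 'I_n.+1}) (ad : 'I_n.+1 * 'I_n.+1) : {set 'I_k} :=
  [set i : 'I_k | inS S (ap_term ad i) && (ap_term ad i != x)].

Lemma ap_through_marks_in x S ad : ad \in aps_through x S ->
  ap_through x (ad, marks_in x S ad) && (marked (ad, marks_in x S ad) \subset S).
Proof.
rewrite inE => /and4P [d0 /allP hin /hasP [i0 i0k /eqP ti0] hS].
apply/andP; split.
  apply/and5P; split => //=.
  - by apply/forallP => i; apply: hin; rewrite mem_iota /=.
  - by rewrite mem_iota /= in i0k; apply/existsP; exists (Ordinal i0k); rewrite /= ti0.
  - by apply/forallP => i; apply/implyP; rewrite inE => /andP [].
  - by rewrite (card_set_ord_count k (fun i => inS S (ap_term ad i) && (ap_term ad i != x))).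
apply/subsetP => z; rewrite inE => /existsP [i /andP [+ /eqP zi]].
rewrite inE => /andP [/existsP [z' /andP [z'S /eqP z'i]] _].
by rewrite (val_inj (etrans zi (esym z'i))).
Qed.

(* Mark each AP counted by AP(x, S) at its indices in S \ {x}: pairs of such APs are then
   distinct members of ap_pairs supported in S. *)
Lemma sum_AP_sq_le S :
  \sum_(1 <= x < n.+1) AP n k' k x (inS S) (intn n) ^ 2 <= ncontained ap_pairs pair_marked S.
Proof.
apply: leq_trans (_ : _ <= \sum_(0 <= x < n.+1) AP n k' k x (inS S) (intn n) ^ 2) _.
  by rewrite (big_ltn (ltn0Sn n)) leq_addl.
rewrite big_mkord /ncontained -sum1_card.
pose P x hh := ((x, hh) \in ap_pairs) && (pair_marked (x, hh) \subset S).
rewrite (eq_bigl (fun c => predT c.1 && P c.1 c.2)) => [|[x hh]]; last by rewrite /P !inE.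
rewrite -(pair_big_dep predT P (fun _ _ => 1)); apply: leq_sum => x _.
rewrite sum1dep_card AP_aps_through -mulnn -cardsX.
pose mark2 (ads : ('I_n.+1 * 'I_n.+1) * ('I_n.+1 * 'I_n.+1)) :=
  ((ads.1, marks_in x S ads.1), (ads.2, marks_in x S ads.2)).
rewrite -(card_imset _ (f := mark2)); last first.
  by move=> [? ?] [? ?] /(congr1 (fun hh => (hh.1.1, hh.2.1))) [-> ->].
apply/subset_leq_card/subsetP => _ /imsetP [[ad1 ad2] /setXP [h1 h2] ->].
case/andP: (ap_through_marks_in h1) => t1 m1; case/andP: (ap_through_marks_in h2) => t2 m2.
by rewrite inE /P inE /= t1 t2 /pair_marked subUset m1 m2.
Qed.

Definition index_in (x : nat) (ad : 'I_n.+1 * 'I_n.+1) : option 'I_k :=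
  [pick i : 'I_k | ap_term ad i == x].

Lemma index_inP x h : ap_through x h -> exists2 i, index_in x h.1 = Some i & ap_term h.1 i = x.
Proof.
case/and5P=> _ _ /existsP [i0 ti0] _ _; rewrite /index_in.
by case: pickP => [i /eqP ti | /(_ i0)]; [exists i | rewrite ti0].
Qed.

Definition encode (x : nat) (h : marked_ap) := (index_in x h.1, h.1.2, h.2).

Lemma encode_inj x h h' : ap_through x h -> ap_through x h' -> encode x h = encode x h' -> h = h'.
Proof.
rewrite /encode => /index_inP [i -> ti] /index_inP [i' -> ti'].
case: h h' ti ti' => [[a d] J] [[a' d'] J'] /= ti ti' [ii' dd' JJ']; subst.
have ea : nat_of_ord a = nat_of_ord a' by move: ti'; rewrite /ap_term /=; lia.
by rewrite (val_inj ea).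
Qed.

Lemma card_ap_pairs : #|ap_pairs| <= n.+1 ^ 3 * #|{: option 'I_k * {set 'I_k}}| ^ 2.
Proof.
pose enc (c : 'I_n.+1 * (marked_ap * marked_ap)) :=
  (c.1, (encode c.1 c.2.1, encode c.1 c.2.2)).
apply: leq_trans (@leq_card_in _ _ enc ap_pairs _) _.
  move=> [x [h1 h2]] [x' [h1' h2']]; rewrite !inE /= => /andP [t1 t2] /andP [t1' t2'].
  move=> e; move: (congr1 fst e) (congr1 (fun c => c.2.1) e) (congr1 (fun c => c.2.2) e).
  move=> /= ex; subst x' => e1 e2.
  by rewrite (encode_inj t1 t1' e1) (encode_inj t2 t2' e2).
by rewrite !card_prod card_ord; apply: eq_leq; nia.
Qed.

Definition meet_index (c : 'I_n.+1 * (marked_ap * marked_ap)) : option ('I_k * 'I_k) :=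
  [pick ij : 'I_k * 'I_k |
    [&& ij.1 \in c.2.1.2, ij.2 \in c.2.2.2 & ap_term c.2.1.1 ij.1 == ap_term c.2.2.1 ij.2]].

Lemma meet_indexP c : marked c.2.1 :&: marked c.2.2 != set0 ->
  exists2 ij, meet_index c = Some ij &
    [/\ ij.1 \in c.2.1.2, ij.2 \in c.2.2.2 & ap_term c.2.1.1 ij.1 = ap_term c.2.2.1 ij.2].
Proof.
case/set0Pn=> z; rewrite !inE => /andP [/existsP [i /andP [iJ /eqP zi]]].
case/existsP=> j /andP [jJ /eqP zj]; rewrite /meet_index.
case: pickP => [[i' j'] /and3P [? ? /eqP ?] | /(_ (i, j))]; first by exists (i', j').
by rewrite /= iJ jJ -zi -zj eqxx.
Qed.

(* Given x and the first AP, the second AP of an overlapping pair is determined by its marks,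
   the index of x in it and the index of a shared marked element: two terms fix an AP. *)
Lemma card_overlapping_pairs :
  #|overlapping_pairs| <=
  n.+1 ^ 2 * #|{: option 'I_k * {set 'I_k}}| ^ 2 * #|{: option ('I_k * 'I_k)}|.
Proof.
pose enc (c : 'I_n.+1 * (marked_ap * marked_ap)) :=
  (c.1, encode c.1 c.2.1, c.2.2.2, meet_index c, index_in c.1 c.2.2.1).
apply: leq_trans (@leq_card_in _ _ enc overlapping_pairs _) _; last first.
  by rewrite !card_prod card_ord; set cp := #|{: option ('I_k * 'I_k)}|; apply: eq_leq; nia.
move=> [x [h1 h2]] [x' [h1' h2']]; rewrite !inE /=.
case/andP=> /andP [t1 t2] ov /andP [/andP [t1' t2'] ov'] e.
move: (congr1 (fun c => c.1.1.1.1) e) => /= ex; subst x'.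
move: (congr1 (fun c => c.1.1.1.2) e) => /= /(encode_inj t1 t1') eh1; subst h1'.
have [[i j] mij [_ jJ tij]] := @meet_indexP (x, (h1, h2)) ov.
have [[i' j'] mij' [_ _ tij']] := @meet_indexP (x, (h1, h2')) ov'.
have [p pp tp] := index_inP t2; have [p' pp' tp'] := index_inP t2'.
move: (congr1 (fun c => c.1.2) e) (congr1 (fun c => c.2) e) (congr1 (fun c => c.1.1.2) e).
rewrite /= mij mij' pp pp' => -[? ?] [?] eJ; subst i' j' p'.
rewrite /= in jJ tij tij'; clear e mij mij' pp pp'.
case: h2 h2' t2 t2' ov ov' eJ jJ tij tij' tp tp' => [[a d] J] [[a' d'] J'] /=.
move=> t2 _ _ _ <- jJ tij tij' tp tp'.
have jp : val j != val p.
  case/and5P: t2 => _ _ _ /forallP /(_ j) /implyP /(_ jJ) /= tjx _.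
  by apply: contraNneq tjx => /val_inj ->; rewrite tp.
have [ea ed] := ap_eq_of_two_terms jp (etrans (esym tij) tij') (etrans tp (esym tp')).
by move: ea ed => /= /val_inj -> /val_inj ->.
Qed.

Lemma weight_split m N : m <= N ->
  weight ap_pairs pair_marked (k + k) m N <=
  #|ap_pairs| * (m ^ (k' + k') * N ^ (k + k - (k' + k')))
  + #|overlapping_pairs| * (m ^ k' * N ^ (k + k - k')).
Proof.
move=> mN; rewrite /weight (big_setID overlapping_pairs) /= addnC -!sum_nat_const.
rewrite (setIidPr (_ : overlapping_pairs \subset ap_pairs)); last first.
  by apply/subsetP => c; rewrite inE => /andP [].
apply: leq_add; last first.
  apply: leq_sum => -[x [h1 h2]]; rewrite !inE /= => /andP [/andP [t1 _] _].
  apply: leq_mixed_expn (card_pair_marked_le _) => //.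
  rewrite (leq_trans _ (subset_leq_card (subsetUl _ _))) //= (card_marked t1).
  by case/and5P: t1.
apply: leq_trans (leq_sum_subset _ (subsetDl ap_pairs overlapping_pairs)).
apply: leq_sum => -[x [h1 h2]]; rewrite !inE /= => /and3P [+ t1 t2].
rewrite t1 t2 negbK => /eqP disj.
apply: leq_mixed_expn (card_pair_marked_le _) => //.
rewrite /pair_marked cardsU disj cards0 subn0 /= (card_marked t1) (card_marked t2).
by case/and5P: t1 => _ _ _ _ J1; case/and5P: t2 => _ _ _ _ J2; apply: leq_add.
Qed.

Lemma weight_le m : k' <= k -> 0 < n -> m <= n -> n ^ k' <= n * m ^ k' ->
  weight ap_pairs pair_marked (k + k) m n <=
  ap_const k * (n ^ 3 * (m ^ (k' + k') * n ^ (k + k - (k' + k')))).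
Proof.
move=> kk n0 mn dense; apply: leq_trans (weight_split mn) _.
have succ_le j : n.+1 ^ j <= 2 ^ j * n ^ j.
  by rewrite -expnMn leq_expn2r // mul2n -addnn -addn1 leq_add2l.
set c := #|{: option 'I_k * {set 'I_k}}| ^ 2; set cp := #|{: option ('I_k * 'I_k)}|.
set r := k + k - (k' + k'); set A1 := m ^ (k' + k') * n ^ r.
have hshift : n ^ 2 * (m ^ k' * n ^ (k + k - k')) <= n ^ 3 * A1.
  have -> : k + k - k' = k' + r by rewrite /r; lia.
  rewrite /A1 !expnD (expnS n 2).
  have -> : n ^ 2 * (m ^ k' * (n ^ k' * n ^ r)) = n ^ 2 * m ^ k' * n ^ r * n ^ k' by lia.
  have -> : n * n ^ 2 * (m ^ k' * m ^ k' * n ^ r) = n ^ 2 * m ^ k' * n ^ r * (n * m ^ k').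
    by lia.
  by rewrite leq_mul2l dense orbT.
rewrite /ap_const -/c -/cp.
apply: (@leq_trans (8 * c * (n ^ 3 * A1) + 4 * cp * c * (n ^ 3 * A1))); last first.
  by apply: eq_leq; lia.
apply: leq_add.
  apply: leq_trans (leq_mul (leq_trans card_ap_pairs (leq_mul (succ_le 3) (leqnn _))) (leqnn _)) _.
  by apply: eq_leq; rewrite -/c; lia.
apply: leq_trans (leq_mul (leq_trans card_overlapping_pairs
  (leq_mul (leq_mul (succ_le 2) (leqnn _)) (leqnn _))) (leqnn _)) _.
have -> : 2 ^ 2 * n ^ 2 * c * cp * (m ^ k' * n ^ (k + k - k'))
          = 4 * cp * c * (n ^ 2 * (m ^ k' * n ^ (k + k - k'))) by lia.
by rewrite leq_mul2l hshift orbT.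
Qed.
End MarkedAPs.

Definition ap_level (K n m k' : nat) : nat := (K * n ^ 3 * m ^ (k' + k')) %/ n ^ (k' + k').

Lemma msets_subset_n n (S : {set 'I_n.+1}) : subset_of_n S -> S \in msets [set~ ord0] #|S|.
Proof.
move=> S0; rewrite inE eqxx andbT; apply/subsetP => z zS; rewrite !inE.
by apply: contraNneq S0 => <-.
Qed.

Lemma leq_double_divn m Q : 0 < Q -> Q <= m -> m <= 2 * Q * (m %/ Q).
Proof.
move=> Q0 Qm; have := ltn_pmod m Q0; have : 0 < m %/ Q by rewrite divn_gt0.
rewrite {3}(divn_eq m Q); set q := m %/ Q; set r := m %% Q; nia.
Qed.

Lemma card_robust_aps k' k Q b n m : k' <= k -> 0 < Q -> 0 < b -> 0 < n -> m <= n -> Q <= m ->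
  n ^ k' <= n * m ^ k' ->
  #|[set S in msets [set~ ord0] m | robust (ap_pairs n k k') (@pair_marked n k)
      (ap_level (ap_const k * b ^ (2 * Q)) n m k') (m %/ Q * (k + k)) S]| * b ^ m <= 'C(n, m).
Proof.
move=> kk Q0 b0 n0 mn Qm dense.
set K := ap_const k * b ^ (2 * Q); set L := ap_level K n m k'.
have cardD : #|[set~ ord0 : 'I_n.+1]| = n by rewrite cardsC1 card_ord.
have hsupp c : c \in ap_pairs n k k' -> #|pair_marked c| <= k + k.
  by move=> _; apply: card_pair_marked_le.
have := card_robust_le hsupp L (m %/ Q) mn (D := [set~ ord0]) (m := m).
rewrite cardD => /(_ (leqnn _)) hcount.
have hweight : b ^ (2 * Q) * weight (ap_pairs n k k') (@pair_marked n k) (k + k) m n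
               <= L.+1 * n ^ (k + k).
  have hL : K * n ^ 3 * m ^ (k' + k') < L.+1 * n ^ (k' + k').
    by rewrite ltn_ceil ?expn_gt0 ?n0.
  have -> : n ^ (k + k) = n ^ (k' + k') * n ^ (k + k - (k' + k')).
    by rewrite -expnD subnKC ?leq_add.
  apply: leq_trans (leq_mul (leqnn _) (weight_le kk n0 mn dense)) _.
  apply: leq_trans (_ : _ <= K * n ^ 3 * m ^ (k' + k') * n ^ (k + k - (k' + k'))) _.
    by apply: eq_leq; rewrite /K; lia.
  by rewrite mulnA leq_mul2r (ltnW hL) orbT.
have := leq_cancel_expn _ hweight hcount; rewrite muln_gt0 expn_gt0 n0 => /(_ isT).
rewrite -expnM; apply: leq_trans; rewrite leq_mul2l leq_pexp2l ?orbT //.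
exact: leq_double_divn.
Qed.

Lemma ap_deletion k' k Q b n m : k' <= k -> 0 < Q -> 0 < b -> 0 < n -> Q <= m ->
  n ^ k' <= n * m ^ k' ->
  exists2 B : {set {set 'I_n.+1}}, #|B| * b ^ m <= 'C(n, m) &
    forall S : {set 'I_n.+1}, subset_of_n S -> #|S| = m -> S \notin B ->
    exists2 X : {set 'I_n.+1}, X \subset S & #|X| <= m %/ Q * (k + k) /\
      \sum_(1 <= x < n.+1) AP n k' k x (inS (S :\: X)) (intn n) ^ 2
        <= ap_level (ap_const k * b ^ (2 * Q)) n m k'.
Proof.
move=> kk Q0 b0 n0 Qm dense.
have [mn | nm] := leqP m n; last first.
  exists set0 => [|S /msets_subset_n + Sm]; first by rewrite cards0.
  rewrite inE => /andP [/subset_leq_card]; rewrite cardsC1 card_ord Sm => mn.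
  by rewrite ltnNge mn in nm.
eexists; first exact: card_robust_aps kk Q0 b0 n0 mn Qm dense.
move=> S /msets_subset_n + Sm; rewrite Sm => SD.
rewrite inE SD /= => /not_robust [X XS [Xle hX]].
by exists X => //; split => //; apply: leq_trans (sum_AP_sq_le _ _ _) hX.
Qed.

Lemma INR_expn a j : INR (a ^ j) = (INR a ^ j)%Re.
Proof. by elim: j => [|j IH]; rewrite ?expn0 // expnS mult_INR IH. Qed.

Lemma leq_INR a b : a <= b -> (INR a <= INR b)%Re.
Proof. by move/leP; apply: le_INR. Qed.

Lemma exists_pos_nat_mul_ge (x y : R) :
  (0 < y)%Re -> exists2 N : nat, 0 < N & (x <= INR N * y)%Re.
Proof.
move=> y0; have [N hN] := INR_archimed y x y0; exists N.+1 => //.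
by rewrite S_INR; lra.
Qed.

Lemma above_threshold k n m Q : 1 < k -> 0 < n -> 0 < Q ->
  (INR Q * Rpower (INR n) (1 - 1 / INR (k - 1)) <= INR m)%Re ->
  Q <= m /\ n ^ (k - 2) <= m ^ (k - 1).
Proof.
move=> k1 n0 Q0 hm.
have n1 : (1 <= INR n)%Re by apply: (leq_INR n0).
have Q1 : (1 <= INR Q)%Re by apply: (leq_INR Q0).
have k11 : (1 <= INR (k - 1))%Re by apply: (@leq_INR 1); lia.
have e0 : (0 <= 1 - 1 / INR (k - 1))%Re.
  suff : (1 / INR (k - 1) <= 1)%Re by lra.
  by rewrite /Rdiv Rmult_1_l -Rinv_1; apply: Rinv_le_contravar; lra.
have R1 : (1 <= Rpower (INR n) (1 - 1 / INR (k - 1)))%Re.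
  by have := Rle_Rpower _ _ _ n1 e0; rewrite Rpower_O; lra.
split; first by apply/leP/INR_le; nra.
apply/leP/INR_le; rewrite !INR_expn.
have Rm : (Rpower (INR n) (1 - 1 / INR (k - 1)) <= INR m)%Re by nra.
rewrite -Rpower_pow; last lra.
apply: Rle_trans (pow_incr _ _ (k - 1) (conj (Rle_trans _ _ _ Rle_0_1 R1) Rm)).
rewrite -Rpower_pow ?Rpower_mult; last lra.
suff -> : ((1 - 1 / INR (k - 1)) * INR (k - 1) = INR (k - 2))%Re by apply: Rle_refl.
have -> : INR (k - 2) = (INR (k - 1) - 1)%Re.
  by rewrite (_ : k - 1 = (k - 2).+1) ?S_INR; [lra | lia].
by field; lra.
Qed.

Lemma density_of_threshold k k' n m : 0 < k' -> k' < k -> 0 < n ->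
  n ^ (k - 2) <= m ^ (k - 1) -> n ^ k' <= n * m ^ k'.
Proof.
move=> k0 kk n0 hnm; have [mn | nm] := leqP m n; last first.
  by rewrite (leq_trans (leq_expn2r _ (ltnW nm))) // leq_pmull.
set r := k - 1 - k'; have nr : 0 < n ^ r by rewrite expn_gt0 n0.
rewrite -(leq_pmul2r nr) -expnD.
have -> : k' + r = (k - 2).+1 by rewrite /r; lia.
rewrite expnS -mulnA leq_mul2l; apply/orP; right.
apply: leq_trans hnm _; rewrite (_ : k - 1 = k' + r); last by rewrite /r; lia.
by rewrite expnD leq_mul2l leq_expn2r ?orbT.
Qed.

Lemma card_le_pow_binom (c C b m : nat) (beta : R) :
  (1 <= INR b * beta)%Re -> (0 < beta)%Re -> c * b ^ m <= C ->
  (INR c <= beta ^ m * INR C)%Re.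
Proof.
move=> hb beta0 /leq_INR; rewrite mult_INR INR_expn => hc.
have bm : (1 <= INR b ^ m * beta ^ m)%Re by rewrite -Rpow_mult_distr; apply: pow_R1_Rle.
have c0 := pos_INR c; have beta_m : (0 <= beta ^ m)%Re by apply: pow_le; lra.
apply: Rle_trans (_ : _ <= INR c * (INR b ^ m * beta ^ m))%Re _; first by nra.
by rewrite -Rmult_assoc Rmult_comm; apply: Rmult_le_compat_l.
Qed.

Lemma card_le_fraction (x m Q r : nat) (xi : R) :
  (INR r <= INR Q * xi)%Re -> (0 < xi)%Re -> x <= m %/ Q * r -> (INR x <= xi * INR m)%Re.
Proof.
move=> hr xi0 /leq_INR; rewrite mult_INR => hx.
have /leq_INR : m %/ Q * Q <= m by apply: leq_divM.
rewrite mult_INR => hQ; have q0 := pos_INR (m %/ Q).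
apply: Rle_trans hx _; apply: Rle_trans (Rmult_le_compat_l _ _ _ q0 hr) _.
by nra.
Qed.

Lemma mean_le_of_level (s K n m k' : nat) : 0 < n -> s <= ap_level K n m k' ->
  (/ INR n * INR s <= INR K * (INR n * (INR m / INR n) ^ k') ^ 2)%Re.
Proof.
move=> n0 hs.
have /leq_INR : s * n ^ (k' + k') <= K * n ^ 3 * m ^ (k' + k').
  by apply: leq_trans (leq_divM _ (n ^ (k' + k'))); rewrite leq_mul2r hs orbT.
have n0' : (0 < INR n)%Re by apply: (lt_INR 0); apply/ltP.
rewrite !mult_INR !INR_expn.
set p := (INR m / INR n)%Re; have -> : INR m = (p * INR n)%Re by rewrite /p; field; lra.
rewrite Rpow_mult_distr => hL.
have nkk : (0 < INR n ^ (k' + k'))%Re by apply: pow_lt.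
have hs' : (INR s <= INR K * INR n ^ 3 * p ^ (k' + k'))%Re.
  by apply: (Rmult_le_reg_r _ _ _ nkk); lra.
rewrite pow_add in hs'.
apply: Rle_trans (Rmult_le_compat_l _ _ _ (Rlt_le _ _ (Rinv_0_lt_compat _ n0')) hs') _.
by apply: Req_le; field; lra.
Qed.

Unset Implicit Arguments.

Theorem lemma4 (k' k : nat) (beta xi : R) :
  (1 <= k')%nat -> (k' < k)%nat -> (0 < beta)%Re -> (0 < xi)%Re ->
  exists C T : R, (0 < C)%Re /\ (0 < T)%Re /\
  exists N : nat, forall n m : nat, (N <= n)%nat ->
    (C * Rpower (INR n) (1 - 1 / INR (k - 1)) <= INR m)%Re ->
    exists B : {set {set 'I_n.+1}},
      (INR #|B| <= pow beta m * INR 'C(n, m))%Re /\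
      forall S : {set 'I_n.+1},
        subset_of_n S -> #|S| = m -> S \notin B ->
        exists X : {set 'I_n.+1},
          X \subset S /\ (INR #|X| <= xi * INR m)%Re /\
          (Rinv (INR n) * INR (\sum_(1 <= x < n.+1) (AP n k' k x (inS (S :\: X)) (intn n)) ^ 2)
             <= T * pow (INR n * pow (INR m / INR n) k') 2)%Re.
Proof.
move=> k0 kk beta0 xi0.
have [b b0 hb] := exists_pos_nat_mul_ge 1 beta0.
have [Q Q0 hQ] := exists_pos_nat_mul_ge (INR (k + k)) xi0.
exists (INR Q), (INR (ap_const k * b ^ (2 * Q))).
split; first by apply: (lt_INR 0); apply/ltP.
split; first by apply: (lt_INR 0); apply/ltP; rewrite muln_gt0 ap_const_gt0 expn_gt0 b0.
exists 1 => n m n0 hm.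
have [Qm hnm] := above_threshold (leq_ltn_trans k0 kk) n0 Q0 hm.
have dense := density_of_threshold k0 kk n0 hnm.
have [B hB hgood] := ap_deletion (ltnW kk) Q0 b0 n0 Qm dense.
exists B; split; first exact: card_le_pow_binom hb beta0 hB.
move=> S S0 Sm SB; have [X XS [Xle hX]] := hgood S S0 Sm SB.
exists X; split; first exact: XS.
by split; [exact: card_le_fraction hQ xi0 Xle | exact: mean_le_of_level n0 hX].
Qed.
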